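(* For every integer $v\ge 2$, the $(v,2,1)$-BIBD on a $v$-set $X$ (whose blocks are all $2$-subsets of $X$) has a weak nesting $\phi:\mathcal{A}\to Y$ with $X\subseteq Y$ and $|Y|=w=\left\lceil \frac{5v-1}{4}\right\rceil$, and this is optimal, i.e. no weak nesting of this BIBD has $|Y|<\left\lceil \frac{5v-1}{4}\right\rceil$.
   Context: A $(v,k,\lambda)$-BIBD is a pair $(X,\mathcal{A})$ where $X$ is a set of $v$ points and $\mathcal{A}$ is a multiset of $k$-subsets of $X$ (blocks) such that every pair of distinct points lies in exactly $\lambda$ blocks. A partial $(w,k,\lambda)$-BIBD is defined in the same way on $w$ points, except that every pair lies in at most $\lambda$ blocks. Given a $(v,k,\lambda)$-BIBD $(X,\mathcal{A})$ and a set $Y\supseteq X$ with $|Y|=w$, a map $\phi:\mathcal{A}\to Y$ is a weak nesting if $\phi(A)\notin A$ for every block $A$ and the multiset $\{A\cup\{\phi(A)\}:A\in\mathcal{A}\}$ is a partial $(w,k+1,\lambda+1)$-BIBD on $Y$. A weak nesting is optimal if $w=|Y|$ is as small as possible. *)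

From mathcomp Require Import all_boot.
Set Implicit Arguments. Unset Strict Implicit. Unset Printing Implicit Defensive.

(* The superset Y of X with |Y| = n is modelled as 'I_n,
   where X is identified with the ordinals of 'I_n with value < v
   (so we require v <= n). *)

Definition is_block (v : nat) (A : {set 'I_v}) : bool := #|A| == 2.

Definition ext_block (v n : nat) (phi : {set 'I_v} -> 'I_n) (A : {set 'I_v})
  : {set 'I_n} :=
  [set y : 'I_n | [exists x in A, val x == val y] || (y == phi A)].

(* phi (restricted to the blocks) is a weak nesting of the complete
   (v,2,1)-BIBD into Y = 'I_n (with X ⊆ Y):
   - phi A ∉ A for every block A,
   - the extended blocks form a partial (n,3,2)-BIBD on Y: every pair of
     distinct points of Y lies in at most 2 extended blocks. *)
Definition weak_nesting (v n : nat) (phi : {set 'I_v} -> 'I_n) : Prop :=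
  v <= n /\
  (forall A : {set 'I_v}, is_block A -> forall x, x \in A -> val (phi A) != val x) /\
  (forall p q : 'I_n, p != q ->
     #|[set A : {set 'I_v} | is_block A && (p \in ext_block phi A)
                                        && (q \in ext_block phi A)]| <= 2).

Definition wopt (v : nat) : nat := (5 * v - 1 + 3) %/ 4.

From mathcomp Require Import all_boot zify.
Set Implicit Arguments. Unset Strict Implicit. Unset Printing Implicit Defensive.

(* Lower bound: the (v choose 2) blocks have v(v-1) incidences (A, x), x in A.
   When phi A lies in X, the pair {x, phi A} determines the incidence: two
   incidences with the same pair {p, q} would give, together with the block
   {p, q}, three extended blocks through p and q.  So there are at most
   (v choose 2) such incidences.  When phi A lies outside X, each pair
   (x, phi A) in X * (Y - X) is used at most twice.  Hence
   (v choose 2) <= 2 v (w - v), i.e. 4 w >= 5 v - 1.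

   Construction for v >= 3: take X = Z_u with u = 2r + 1 odd, plus a point oo
   when v = u + 1 is even.  The block {x, x + d} (1 <= d <= r) gets the apex
   x + (r + 1 + d) / 2 when d + r is odd (except d = 1 when v and r are both
   even).  Its two incidences then have the distances (r + 1 +- d) / 2 in Z_u.
   For these d the distances are pairwise distinct, and they avoid
   s = floor((r + 1) / 2) when v is even.  Each remaining distance class is a
   2-regular graph and gets its own new point; there are exactly
   ceil((5v - 1) / 4) - v of them.  The blocks {oo, x} get the
   apex x + s.  An inner incidence {x, c} with x <> oo has c - x in [1, r],
   so no pair is used in both directions, and it determines its block. *)

Lemma card_le2P (T : finType) (S : {set T}) (a : T) : a \in S ->
  reflect {in S &, forall b c, b != a -> c != a -> b = c} (#|S| <= 2).
Proof.
move=> aS; rewrite (cardsD1 a S) aS add1n ltnS.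
apply: (iffP card_le1_eqP) => eqS b c bS cS.
  by move=> ba ca; apply: eqS; rewrite in_setD1 ?ba ?ca.
by move: bS cS; rewrite !in_setD1 => /andP[ba bS] /andP[ca cS]; apply: eqS.
Qed.

Lemma eq_set2 (T : finType) (a b c d : T) : a != b -> [set a; b] = [set c; d] ->
  (a = c /\ b = d) \/ (a = d /\ b = c).
Proof.
move=> ab eq_ab_cd; have mem z : (z \in [set a; b]) = (z \in [set c; d]) by rewrite eq_ab_cd.
have /set2P[ac | ad] : a \in [set c; d] by rewrite -mem set21.
- left; split=> //; have /set2P[bc | //] : b \in [set c; d] by rewrite -mem set22.
  by move: ab; rewrite ac bc eqxx.
- right; split=> //; have /set2P[// | bd] : b \in [set c; d] by rewrite -mem set22.
  by move: ab; rewrite ad bd eqxx.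
Qed.

Lemma card_fibers (T U : finType) (f : T -> U) (S : {set T}) (R : {set U}) :
  {in S, forall t, f t \in R} -> #|S| = \sum_(u in R) #|[set t in S | f t == u]|.
Proof.
move=> fSR; rewrite -sum1_card (partition_big f (mem R)) //=.
by apply: eq_bigr => u _; rewrite -sum1_card; apply: eq_bigl => t; rewrite inE.
Qed.

Lemma card_le_fibers (T U : finType) (f : T -> U) (S : {set T}) (R : {set U}) k :
  {in S, forall t, f t \in R} -> {in R, forall u, #|[set t in S | f t == u]| <= k} ->
  #|S| <= k * #|R|.
Proof.
move=> fSR fib; rewrite (card_fibers fSR) mulnC -sum_nat_const.
exact: leq_sum.
Qed.

(** * Weak nestings through their incidences *)

Section Nesting.
Variables (v n : nat) (le_vn : v <= n) (phi : {set 'I_v} -> 'I_n).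

Definition toY : 'I_v -> 'I_n := widen_ord le_vn.
Definition X_in_Y : {set 'I_n} := toY @: [set: 'I_v].

Lemma val_toY x : val (toY x) = val x.
Proof. by []. Qed.

Lemma toY_inj : injective toY.
Proof. by move=> x y /(congr1 val); rewrite !val_toY => /val_inj. Qed.

Lemma mem_toY x (A : {set 'I_v}) : (toY x \in toY @: A) = (x \in A).
Proof. by rewrite mem_imset //; exact: toY_inj. Qed.

Lemma mem_X_in_Y q : (q \in X_in_Y) = (val q < v).
Proof.
apply/imsetP/idP => [[x _ ->] | q_lt]; first by rewrite val_toY ltn_ord.
by exists (Ordinal q_lt); last exact: val_inj.
Qed.

Lemma toY_Ordinal q (q_lt : val q < v) : toY (Ordinal q_lt) = q.
Proof. exact: val_inj. Qed.

Lemma notin_toY q (A : {set 'I_v}) : v <= val q -> q \notin toY @: A.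
Proof.
by move=> le_vq; apply/imsetP => -[x _ qx]; move: le_vq; rewrite qx val_toY leqNgt ltn_ord.
Qed.

Lemma card_X_in_Y : #|X_in_Y| = v.
Proof. by rewrite card_imset ?cardsT ?card_ord //; exact: toY_inj. Qed.

Lemma ext_blockE A : ext_block phi A = phi A |: toY @: A.
Proof.
apply/setP => q; rewrite !inE orbC; congr (_ || _).
apply/existsP/imsetP => [[x /andP[xA /eqP xq]] | [x xA ->]]; last by exists x; rewrite xA /=.
by exists x => //; apply: val_inj.
Qed.

Definition pair_blocks p q :=
  [set A : {set 'I_v} | is_block A && (p \in ext_block phi A) && (q \in ext_block phi A)].

Definition apex_load x q := [set A : {set 'I_v} | is_block A && (x \in A) && (phi A == q)].

Lemma mem_pair_blocks A p q : (A \in pair_blocks p q) =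
  [&& is_block A, p \in phi A |: toY @: A & q \in phi A |: toY @: A].
Proof. by rewrite -!ext_blockE inE andbA. Qed.

Lemma pair_blocksC p q : pair_blocks p q = pair_blocks q p.
Proof. by apply/setP => A; rewrite !mem_pair_blocks; congr (_ && _); rewrite andbC. Qed.

Lemma pair_blocks_outer x q : v <= val q -> pair_blocks (toY x) q = apex_load x q.
Proof.
move=> le_vq; apply/setP => A; rewrite mem_pair_blocks [in RHS]inE -andbA !in_setU1.
rewrite (negbTE (notin_toY A le_vq)) orbF (eq_sym q); case: (is_block A) => //=.
have [phi_q | _] := eqVneq (phi A) q; last by rewrite !andbF.
rewrite !andbT mem_toY; case: eqP => // /(congr1 val); rewrite val_toY phi_q => xq.
by move: le_vq; rewrite -xq leqNgt ltn_ord.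
Qed.

Lemma is_block_set2 (x y : 'I_v) : is_block [set x; y] = (x != y).
Proof. by rewrite /is_block cards2; case: (x != y). Qed.

Lemma block_set2 A (x y : 'I_v) : is_block A -> x \in A -> y \in A -> x != y -> A = [set x; y].
Proof.
move=> /eqP cardA xA yA neq_xy; apply/eqP; rewrite eq_sym eqEcard cardA cards2 neq_xy.
by rewrite subUset !sub1set xA yA.
Qed.

Definition apex_notin :=
  forall A, is_block A -> forall x, x \in A -> val (phi A) != val x.

Definition inner_incidence_inj := forall A B x y,
  is_block A -> is_block B -> x \in A -> y \in B -> val (phi A) < v -> val (phi B) < v ->
  [set toY x; phi A] = [set toY y; phi B] -> A = B.

Definition outer_load_le2 := forall x q, v <= val q -> #|apex_load x q| <= 2.

Lemma apex_notin_toY A : apex_notin -> is_block A -> phi A \notin toY @: A.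
Proof.
move=> notin blA; apply/imsetP => -[x xA phiA].
by move: (notin A blA x xA); rewrite phiA eqxx.
Qed.

Lemma toY_neq_apex A x : apex_notin -> is_block A -> x \in A -> toY x != phi A.
Proof.
by move=> notin blA xA; apply: contraNneq (apex_notin_toY notin blA) => <-; rewrite mem_toY.
Qed.

Lemma weak_nesting_inner_incidence_inj : weak_nesting phi -> inner_incidence_inj.
Proof.
move=> [_ [notin nest]] A B x y blA blB xA yB phiA_lt _ eqAB.
have [c _ phiA] : exists2 c, c \in [set: 'I_v] & phi A = toY c.
  by apply/imsetP; rewrite mem_X_in_Y.
have neq_xc : x != c by apply: contraTneq (notin A blA x xA) => ->; rewrite phiA val_toY eqxx.
have C_in : [set x; c] \in pair_blocks (toY x) (toY c).
  by rewrite mem_pair_blocks is_block_set2 neq_xc !in_setU1 !mem_toY !inE !eqxx !orbT.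
have in_pairs D z : is_block D -> z \in D -> [set toY z; phi D] = [set toY x; toY c] ->
    D \in pair_blocks (toY x) (toY c) /\ D != [set x; c].
  move=> blD zD eqD; have phiD : phi D \in [set toY x; toY c] by rewrite -eqD set22.
  split.
    have sub : [set toY x; toY c] \subset phi D |: toY @: D.
      by rewrite -eqD subUset !sub1set !in_setU1 mem_toY zD eqxx orbT.
    by rewrite mem_pair_blocks blD !(subsetP sub) ?set21 ?set22.
  apply: contraNneq (apex_notin_toY notin blD) => eqDC.
  by case/set2P: phiD => ->; rewrite eqDC mem_toY ?set21 ?set22.
have eqA : [set toY x; phi A] = [set toY x; toY c] by rewrite phiA.
have [A_in neAC] := in_pairs A x blA xA eqA.
have [B_in neBC] := in_pairs B y blB yB (etrans (esym eqAB) eqA).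
by apply: (card_le2P C_in (nest _ _ _)) => //; rewrite (inj_eq toY_inj).
Qed.

Lemma weak_nesting_outer_load : weak_nesting phi -> outer_load_le2.
Proof.
move=> [_ [_ nest]] x q le_vq; rewrite -pair_blocks_outer //; apply: nest.
by apply/eqP => xq; move: le_vq; rewrite -xq val_toY leqNgt ltn_ord.
Qed.

Lemma pair_blocks_incidence x y A : x != y -> A \in pair_blocks (toY x) (toY y) ->
  A != [set x; y] ->
  exists2 z, z \in A & val (phi A) < v /\ [set toY z; phi A] = [set toY x; toY y].
Proof.
move=> neq_xy; rewrite mem_pair_blocks !in_setU1 !mem_toY => /and3P[blA px py] neA.
have [phix | nphix] := eqVneq (toY x) (phi A).
  have yA : y \in A by move: py; rewrite -phix (inj_eq toY_inj) eq_sym (negbTE neq_xy).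
  by exists y => //; rewrite -phix val_toY ltn_ord setUC.
have xA : x \in A by move: px; rewrite (negbTE nphix).
have [phiy | nphiy] := eqVneq (toY y) (phi A).
  by exists x => //; rewrite -phiy val_toY ltn_ord.
by move: py neA; rewrite (negbTE nphiy) /= => yA; rewrite (block_set2 blA xA yA neq_xy) eqxx.
Qed.

Lemma pair_blocks_inner x y :
  inner_incidence_inj -> x != y -> #|pair_blocks (toY x) (toY y)| <= 2.
Proof.
move=> inj neq_xy.
have B0_in : [set x; y] \in pair_blocks (toY x) (toY y).
  by rewrite mem_pair_blocks is_block_set2 neq_xy !in_setU1 !mem_toY !inE !eqxx !orbT.
apply/(card_le2P B0_in) => A B A_in B_in neA neB.
have [z zA [phiA_lt eqA]] := pair_blocks_incidence neq_xy A_in neA.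
have [w wB [phiB_lt eqB]] := pair_blocks_incidence neq_xy B_in neB.
move: A_in B_in; rewrite !mem_pair_blocks => /andP[blA _] /andP[blB _].
by apply: (inj A B z w) => //; rewrite eqA eqB.
Qed.

Lemma weak_nesting_of :
  apex_notin -> inner_incidence_inj -> outer_load_le2 -> weak_nesting phi.
Proof.
move=> notin inj load; split=> //; split=> // p q neq_pq.
change (#|pair_blocks p q| <= 2).
have [p_lt | p_ge] := ltnP (val p) v; have [q_lt | q_ge] := ltnP (val q) v.
- rewrite -(toY_Ordinal p_lt) -(toY_Ordinal q_lt) in neq_pq *.
  by apply: pair_blocks_inner; rewrite // -(inj_eq toY_inj).
- by rewrite -(toY_Ordinal p_lt) pair_blocks_outer //; apply: load.
- by rewrite pair_blocksC -(toY_Ordinal q_lt) pair_blocks_outer //; apply: load.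
rewrite (_ : pair_blocks p q = set0) ?cards0 //; apply/setP => A.
rewrite mem_pair_blocks !in_setU1 (negbTE (notin_toY A p_ge)) (negbTE (notin_toY A q_ge)).
rewrite !orbF inE.
by apply: contraNF neq_pq => /and3P[_ /eqP -> /eqP ->].
Qed.

Lemma weak_nestingP :
  weak_nesting phi <-> [/\ apex_notin, inner_incidence_inj & outer_load_le2].
Proof.
split=> [nest | [notin inj load]]; last exact: weak_nesting_of.
split; first by case: nest => _ [].
  exact: weak_nesting_inner_incidence_inj.
exact: weak_nesting_outer_load.
Qed.

(** * The lower bound *)

Definition incidences := [set Ax : {set 'I_v} * 'I_v | is_block Ax.1 && (Ax.2 \in Ax.1)].
Definition inner_incidences := [set Ax in incidences | val (phi Ax.1) < v].
Definition outer_incidences := [set Ax in incidences | v <= val (phi Ax.1)].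

Lemma card_incidences : #|incidences| = 2 * 'C(v, 2).
Proof.
have fst_blocks : {in incidences, forall Ax, Ax.1 \in [set A : {set 'I_v} | #|A| == 2]}.
  by move=> Ax; rewrite !inE => /andP[].
rewrite (card_fibers fst_blocks) -[v in 'C(v, _)]card_ord -card_draws mulnC -sum_nat_const.
apply: eq_bigr => A; rewrite inE => /eqP cardA.
have -> : [set Ax in incidences | Ax.1 == A] = [set (A, x) | x in A].
  apply/setP => -[B x]; rewrite !inE /=.
  apply/andP/imsetP => [[/andP[_ xB] /eqP eqBA] | [y yA [-> ->]]].
    by exists x; rewrite -?eqBA // eqBA.
  by rewrite /is_block cardA eqxx yA.
by rewrite card_imset ?cardA // => x y [].
Qed.

Lemma card_inner_incidences :
  apex_notin -> inner_incidence_inj -> #|inner_incidences| <= 'C(v, 2).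
Proof.
move=> notin inj; rewrite -[v in 'C(v, _)]card_X_in_Y -cards_draws -[X in _ <= X]mul1n.
apply: (card_le_fibers (f := fun Ax => [set toY Ax.2; phi Ax.1])).
  move=> [A x]; rewrite !inE /= => /andP[/andP[blA xA] phiA_lt].
  rewrite subUset !sub1set !mem_X_in_Y val_toY ltn_ord phiA_lt cards2 /=.
  by rewrite (toY_neq_apex notin blA xA).
move=> B _; apply/card_le1_eqP => -[A x] [A' x'].
rewrite !inE /= => /andP[/andP[/andP[blA xA] phiA_lt] /eqP eqA].
move=> /andP[/andP[/andP[blA' xA'] phiA'_lt] /eqP eqA'].
have eqAA' := inj A A' x x' blA blA' xA xA' phiA_lt phiA'_lt (etrans eqA (esym eqA')).
subst A'; have neq_x' := toY_neq_apex notin blA xA'.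
move: eqA'; rewrite -{}eqA => /(eq_set2 neq_x') [[/toY_inj -> //] | [eq_x' _]].
by rewrite eq_x' eqxx in neq_x'.
Qed.

Lemma card_outer_incidences : outer_load_le2 -> #|outer_incidences| <= 2 * (v * (n - v)).
Proof.
move=> load; have cardR : #|setX [set: 'I_v] (~: X_in_Y)| = v * (n - v).
  by rewrite cardsX cardsT card_ord cardsCs setCK card_ord card_X_in_Y.
rewrite -cardR; apply: (card_le_fibers (f := fun Ax => (Ax.2, phi Ax.1))).
  by move=> [A x]; rewrite !inE /= mem_X_in_Y -leqNgt => /andP[_].
move=> [x q]; rewrite !inE /= mem_X_in_Y -leqNgt => le_vq.
apply: leq_trans (load x q le_vq); apply: leq_trans (leq_imset_card (fun A => (A, x)) _).
apply/subset_leq_card/subsetP => -[A y]; rewrite !inE /= => /andP[/andP[/andP[blA yA] _]].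
case/eqP => eq_yx phi_q; rewrite -eq_yx; apply: imset_f.
by rewrite inE blA yA phi_q eqxx.
Qed.

Lemma weak_nesting_wopt : weak_nesting phi -> wopt v <= n.
Proof.
case/weak_nestingP => notin inj load.
have split_inc : #|inner_incidences| + #|outer_incidences| = 2 * 'C(v, 2).
  rewrite -card_incidences -(cardsID [set Ax | val (phi Ax.1) < v] incidences).
  by congr (_ + _); apply: eq_card => Ax; rewrite !inE // -leqNgt andbC.
have inner_le := card_inner_incidences notin inj.
have outer_le := card_outer_incidences load.
have even : ~~ odd (v * v.-1) by case: v => //= k; rewrite oddM /= andNb.
have : v * v.-1 <= v * (4 * (n - v)).
  by rewrite mulnCA; move: split_inc inner_le; rewrite bin2; lia.
have [-> // | v_gt0] := posnP v; rewrite leq_pmul2l // /wopt; lia.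
Qed.

End Nesting.

(** * A cyclic weak nesting *)

Ltac case_ifs :=
  repeat match goal with |- context [if ?b then _ else _] =>
    lazymatch b with context [if _ then _ else _] => fail | _ => case: (boolP b) => ? end end.

Section ModularSteps.
Variable m : nat.

Definition cadd x d := if x + d < m then x + d else x + d - m.
Definition cdist x y := if x <= y then y - x else y + m - x.

Lemma cadd_lt x d : x < m -> d < m -> cadd x d < m.
Proof. rewrite /cadd; case_ifs; lia. Qed.

Lemma caddK x d : x < m -> d < m -> cadd (cadd x d) (m - d) = x.
Proof. rewrite /cadd; case_ifs; lia. Qed.

Lemma cdist_cadd x d : x < m -> d < m -> cdist x (cadd x d) = d.
Proof. rewrite /cadd /cdist; case_ifs; lia. Qed.

Lemma cadd_cdist x y : x < m -> y < m -> cadd x (cdist x y) = y.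
Proof. rewrite /cadd /cdist; case_ifs; lia. Qed.

Lemma cdist_caddr x d e : x < m -> d <= e < m -> cdist (cadd x d) (cadd x e) = e - d.
Proof. rewrite /cadd /cdist; case_ifs; lia. Qed.

Lemma cdistC x y : x < m -> y < m -> x != y -> cdist x y + cdist y x = m.
Proof. rewrite /cdist; case_ifs; lia. Qed.

Lemma cdist_gt0 x y : x < m -> y < m -> x != y -> 0 < cdist x y < m.
Proof. rewrite /cdist; case_ifs; lia. Qed.

End ModularSteps.

Section Cyclic.
Variable v : nat.
Hypothesis v_gt2 : 2 < v.

(* The points 0 .. cyc - 1 of 'I_v form Z_cyc; when v is even, the last point
   cyc plays oo.  Then cyc = 2 rad + 1 and shift_inf = s. *)
Definition cyc := if odd v then v else v.-1.
Definition rad := cyc./2.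
Definition shift_inf := rad.+1./2.

Definition inner_diff d := odd (d + rad) && ~~ [&& ~~ odd v, ~~ odd rad & d == 1].
Definition apex_diff d := (rad.+1 + d)./2.
(* Numbers the distances d <= rad that are not inner_diff as 0, 1, 2, ... *)
Definition outer_index d := if ~~ odd v && ~~ odd rad then d./2 else d.-1./2.

Definition short_apex x d :=
  if inner_diff d then cadd cyc x (apex_diff d) else v + outer_index d.

Definition apex x y :=
  if x == cyc then cadd cyc y shift_inf
  else if y == cyc then cadd cyc x shift_inf
  else if cdist cyc x y <= rad then short_apex x (cdist cyc x y)
  else short_apex y (cdist cyc y x).

Definition apex_inv x c :=
  if x == cyc then cadd cyc c (cyc - shift_inf)
  else if (cdist cyc x c == shift_inf) && (cyc < v) then cyc
  else if rad < (cdist cyc x c).*2 then cadd cyc x ((cdist cyc x c).*2 - rad.+1)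
  else cadd cyc x (cyc - (rad.+1 - (cdist cyc x c).*2)).

Lemma cyc_facts : [/\ cyc = rad.*2.+1, 0 < rad & v = cyc + ~~ odd v].
Proof.
by rewrite /rad /cyc; case: ifP => odd_v; split=> //; lia.
Qed.

Lemma inner_diffE d : inner_diff d -> 0 < d <= rad ->
  [/\ (apex_diff d).*2 = rad + d + 1, d < apex_diff d <= rad
    & ~~ odd v -> apex_diff d - d != shift_inf].
Proof.
by rewrite /inner_diff /apex_diff /shift_inf => inner d_rad; split; lia.
Qed.

Lemma outer_index_lt d : 0 < d <= rad -> ~~ inner_diff d -> v + outer_index d < wopt v.
Proof. rewrite /inner_diff /outer_index /wopt /rad /cyc; case: ifP => odd_v; case_ifs; lia. Qed.

Lemma outer_index_inj d1 d2 : 0 < d1 <= rad -> 0 < d2 <= rad ->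
  ~~ inner_diff d1 -> ~~ inner_diff d2 -> outer_index d1 = outer_index d2 -> d1 = d2.
Proof. rewrite /inner_diff /outer_index; case: (odd v); case: (odd rad) => /=. all: lia. Qed.

Variant apex_spec x y : nat -> Prop :=
  | ApexInfL of x = cyc & y < cyc : apex_spec x y (cadd cyc y shift_inf)
  | ApexInfR of y = cyc & x < cyc : apex_spec x y (cadd cyc x shift_inf)
  | ApexFwd d of x < cyc & 0 < d <= rad & y = cadd cyc x d : apex_spec x y (short_apex x d)
  | ApexBwd d of y < cyc & 0 < d <= rad & x = cadd cyc y d : apex_spec x y (short_apex y d).

Lemma apexP x y : x < v -> y < v -> x != y -> apex_spec x y (apex x y).
Proof.
move=> x_lt y_lt neq_xy; have [cycE rad_gt0 cyc_v] := cyc_facts.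
have pt_lt z : z < v -> z != cyc -> z < cyc by lia.
rewrite /apex; have [x_cyc | x_ncyc] := eqVneq x cyc.
  by apply: ApexInfL => //; apply: pt_lt; rewrite // -x_cyc eq_sym.
have [y_cyc | y_ncyc] := eqVneq y cyc; first exact: ApexInfR (pt_lt x x_lt x_ncyc).
have [x_lt' y_lt'] := (pt_lt x x_lt x_ncyc, pt_lt y y_lt y_ncyc).
have := cdistC x_lt' y_lt' neq_xy; have := cdist_gt0 x_lt' y_lt' neq_xy.
case: ifP => short dist_gt0 distC.
  by apply: ApexFwd; rewrite ?cadd_cdist //; lia.
by apply: ApexBwd; rewrite ?cadd_cdist //; lia.
Qed.

Lemma shift_inf_bounds : 0 < shift_inf <= rad.
Proof. have [_ rad_gt0 _] := cyc_facts; rewrite /shift_inf; lia. Qed.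

Lemma short_apex_inner x d : x < cyc -> 0 < d <= rad -> short_apex x d < v ->
  inner_diff d /\ short_apex x d = cadd cyc x (apex_diff d).
Proof. by rewrite /short_apex; case: ifP => //; lia. Qed.

Lemma apex_lt_cyc x y : x < v -> y < v -> x != y -> apex x y < v -> apex x y < cyc.
Proof.
move=> x_lt y_lt neq_xy; have [cycE _ _] := cyc_facts; have s_bd := shift_inf_bounds.
case: (apexP x_lt y_lt neq_xy) => [_ z_lt | _ z_lt | d z_lt d_bd _ | d z_lt d_bd _] apex_lt;
  try by apply: cadd_lt; lia.
all: have [/inner_diffE/(_ d_bd) [_ e_bd _] ->] := short_apex_inner z_lt d_bd apex_lt.
all: by apply: cadd_lt; lia.
Qed.

Lemma cdist_apex x y : x < v -> y < v -> x != y -> apex x y < v -> x < cyc ->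
  0 < cdist cyc x (apex x y) <= rad.
Proof.
move=> x_lt y_lt neq_xy; have [cycE _ _] := cyc_facts; have s_bd := shift_inf_bounds.
case: (apexP x_lt y_lt neq_xy) => [-> | _ _ | d _ d_bd _ | d y_lt' d_bd ->] apex_lt x_lt';
  try by rewrite ?ltnn // cdist_cadd //; lia.
- have [/inner_diffE/(_ d_bd) [_ e_bd _] ->] := short_apex_inner x_lt' d_bd apex_lt.
  by rewrite cdist_cadd //; lia.
- have [/inner_diffE/(_ d_bd) [_ e_bd _] ->] := short_apex_inner y_lt' d_bd apex_lt.
  by rewrite cdist_caddr //; lia.
Qed.

Lemma apexK x y : x < v -> y < v -> x != y -> apex x y < v -> apex_inv x (apex x y) = y.
Proof.
move=> x_lt y_lt neq_xy; have [cycE _ cyc_v] := cyc_facts; have s_bd := shift_inf_bounds.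
rewrite /apex_inv; case: (apexP x_lt y_lt neq_xy)
  => [-> y_lt' | y_cyc x_lt' | d x_lt' d_bd -> | d y_lt' d_bd ->] apex_lt.
- by rewrite eqxx caddK //; lia.
- have cyc_lt : cyc < v by rewrite -y_cyc.
  by rewrite (ltn_eqF x_lt') cdist_cadd ?eqxx ?cyc_lt //; lia.
- have [/inner_diffE/(_ d_bd) [e2 e_bd _] ->] := short_apex_inner x_lt' d_bd apex_lt.
  rewrite (ltn_eqF x_lt') cdist_cadd //; last by lia.
  rewrite ifN; last by apply/nandP; left; apply/eqP; rewrite /shift_inf; lia.
  by rewrite ifT; [congr (cadd cyc) | ]; lia.
- have [/inner_diffE/(_ d_bd) [e2 e_bd e_s] ->] := short_apex_inner y_lt' d_bd apex_lt.
  have x_lt' : cadd cyc y d < cyc by apply: cadd_lt; lia.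
  rewrite (ltn_eqF x_lt') cdist_caddr //; last by lia.
  rewrite ifN; last by case: (odd v) cyc_v e_s => /= cyc_v e_s; [|move: e_s => /(_ isT)]; lia.
  by rewrite ifN; [rewrite (_ : _ - _ = cyc - d) ?caddK | ]; lia.
Qed.

Lemma apex_sym x y : x < v -> y < v -> x != y -> apex x y = apex y x.
Proof.
move=> x_lt y_lt neq_xy; rewrite /apex.
have [x_cyc | x_ncyc] := eqVneq x cyc.
  by rewrite -x_cyc eq_sym (negbTE neq_xy).
have [//| y_ncyc] := eqVneq y cyc; have [cycE _ cyc_v] := cyc_facts.
have x_lt' : x < cyc by lia.
have y_lt' : y < cyc by lia.
by have := cdistC x_lt' y_lt' neq_xy; do 2!case: ifP => ?; lia.
Qed.

Lemma apex_neq x y : x < v -> y < v -> x != y -> apex x y != x.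
Proof.
move=> x_lt y_lt neq_xy; have [_ _ cyc_v] := cyc_facts.
have [apex_lt | ] := ltnP (apex x y) v; last by lia.
have apex_lt' := apex_lt_cyc x_lt y_lt neq_xy apex_lt.
have [x_cyc | x_ncyc] := eqVneq x cyc; first by rewrite {2}x_cyc (ltn_eqF apex_lt').
have x_lt' : x < cyc by lia.
have := cdist_apex x_lt y_lt neq_xy apex_lt x_lt'.
by apply: contraTneq => ->; rewrite /cdist leqnn subnn.
Qed.

Lemma apex_outer x y : x < v -> y < v -> x != y -> v <= apex x y ->
  exists d, [/\ 0 < d <= rad, ~~ inner_diff d, apex x y = v + outer_index d
              & y = cadd cyc x d \/ y = cadd cyc x (cyc - d)].
Proof.
move=> x_lt y_lt neq_xy; have [cycE _ cyc_v] := cyc_facts.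
have s_lt : shift_inf < cyc by have := shift_inf_bounds; lia.
case: (apexP x_lt y_lt neq_xy) => [_ z_lt | _ z_lt | d x_lt' d_bd y_eq | d y_lt' d_bd x_eq];
  try by move=> le_apex; have := cadd_lt z_lt s_lt; lia.
all: rewrite /short_apex; case: ifP => inner.
- by have [_ e_bd _] := inner_diffE inner d_bd; have := @cadd_lt cyc x (apex_diff d) x_lt'; lia.
- by exists d; split; rewrite ?inner //; left.
- by have [_ e_bd _] := inner_diffE inner d_bd; have := @cadd_lt cyc y (apex_diff d) y_lt'; lia.
- by exists d; split; rewrite ?inner // x_eq caddK //; [right | lia].
Qed.

Lemma apex_lt_wopt x y : x < v -> y < v -> x != y -> apex x y < wopt v.
Proof.
move=> x_lt y_lt neq_xy; have [apex_lt | le_apex] := ltnP (apex x y) v.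
  by apply: leq_trans apex_lt _; rewrite /wopt; lia.
have [d [d_bd outer -> _]] := apex_outer x_lt y_lt neq_xy le_apex.
exact: outer_index_lt.
Qed.

Lemma apex_outer_collision x y1 y2 y3 : x < v -> y1 < v -> y2 < v -> y3 < v ->
  x != y1 -> x != y2 -> x != y3 -> v <= apex x y1 ->
  apex x y2 = apex x y1 -> apex x y3 = apex x y1 -> y2 != y1 -> y3 != y1 -> y2 = y3.
Proof.
move=> x_lt y1_lt y2_lt y3_lt ne1 ne2 ne3 le_apex eq2 eq3.
have [d1 [bd1 out1 q1 y1E]] := apex_outer x_lt y1_lt ne1 le_apex.
have /(_ x_lt y2_lt ne2) := @apex_outer x y2; rewrite eq2 => /(_ le_apex) [d2 [bd2 out2 q2 y2E]].
have /(_ x_lt y3_lt ne3) := @apex_outer x y3; rewrite eq3 => /(_ le_apex) [d3 [bd3 out3 q3 y3E]].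
have d12 : d2 = d1 by apply: outer_index_inj => //; lia.
have d13 : d3 = d1 by apply: outer_index_inj => //; lia.
by move: y2E y3E; rewrite d12 d13; lia.
Qed.

Lemma apex_no_2cycle x x' y y' : x < v -> x' < v -> y < v -> y' < v -> x != x' -> y != y' ->
  apex x x' = y -> apex y y' = x -> False.
Proof.
move=> x_lt x'_lt y_lt y'_lt neq_x neq_y apex_x apex_y; have [cycE _ _] := cyc_facts.
have inner_x : apex x x' < v by rewrite apex_x.
have inner_y : apex y y' < v by rewrite apex_y.
have y_lt' : y < cyc by rewrite -apex_x apex_lt_cyc.
have x_lt' : x < cyc by rewrite -apex_y apex_lt_cyc.
have := cdist_apex x_lt x'_lt neq_x inner_x x_lt'; rewrite apex_x => dist_xy.
have := cdist_apex y_lt y'_lt neq_y inner_y y_lt'; rewrite apex_y => dist_yx.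
have neq_xy : x != y by apply: contraTneq dist_xy => ->; rewrite /cdist leqnn subnn.
by have := cdistC x_lt' y_lt' neq_xy; lia.
Qed.

Lemma le_v_wopt : v <= wopt v.
Proof. by rewrite /wopt; lia. Qed.

Variable y0 : 'I_(wopt v).

Definition cyclic_nesting (A : {set 'I_v}) : 'I_(wopt v) :=
  if enum A is [:: a; b] then insubd y0 (apex a b) else y0.

Lemma cyclic_nesting_block A x : is_block A -> x \in A ->
  exists2 y : 'I_v, x != y & A = [set x; y] /\ val (cyclic_nesting A) = apex x y.
Proof.
move=> /eqP cardA xA; have := enum_uniq (mem A); have memA := mem_enum (mem A).
rewrite /cyclic_nesting; have := cardA; rewrite cardE.
case: (enum A) memA => [|a [|b []]] // memA _ /=; rewrite inE andbT => neq_ab.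
have eqA : A = [set a; b] by apply/setP => z; rewrite -memA !inE.
have val_apex (c d : 'I_v) : c != d -> val (insubd y0 (apex c d)) = apex c d.
  by move=> neq_cd; rewrite val_insubd apex_lt_wopt ?ltn_ord.
move: xA; rewrite eqA => /set2P[-> | ->]; first by exists b; rewrite ?val_apex.
by exists a; rewrite 1?eq_sym // setUC val_apex // apex_sym ?ltn_ord // eq_sym.
Qed.

Lemma cyclic_apex_notin : apex_notin cyclic_nesting.
Proof.
move=> A blA x xA; have [y neq_xy [_ ->]] := cyclic_nesting_block blA xA.
exact: apex_neq.
Qed.

Lemma cyclic_inner_incidence_inj : inner_incidence_inj le_v_wopt cyclic_nesting.
Proof.
move=> A B x y blA blB xA yB phiA_lt phiB_lt.
have [x' neq_x [eqA phiA]] := cyclic_nesting_block blA xA.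
have [y' neq_y [eqB phiB]] := cyclic_nesting_block blB yB.
case/(eq_set2 (toY_neq_apex le_v_wopt cyclic_apex_notin blA xA)).
  case=> /toY_inj eq_xy eq_phi; subst y; rewrite eqA eqB; congr [set x; _]; apply: val_inj.
  rewrite -[LHS](apexK _ _ neq_x) -?phiA ?ltn_ord //.
  by rewrite eq_phi phiB apexK -?phiB ?ltn_ord.
case=> phiB_x phiA_y; exfalso; apply: (apex_no_2cycle _ _ _ _ neq_x neq_y); rewrite ?ltn_ord //.
  by rewrite -phiA phiA_y.
by rewrite -phiB -phiB_x.
Qed.

Lemma cyclic_outer_load : outer_load_le2 cyclic_nesting.
Proof.
move=> x q le_vq.
have [-> | [A0 A0_in]] := set_0Vmem (apex_load cyclic_nesting x q); first by rewrite cards0.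
apply/(card_le2P A0_in) => B C; rewrite !inE.
move: A0_in; rewrite !inE => /andP[/andP[bl0 x0] /eqP phi0].
move=> /andP[/andP[blB xB] /eqP phiB] /andP[/andP[blC xC] /eqP phiC] neB neC.
have [y1 neq1 [eq0 val0]] := cyclic_nesting_block bl0 x0.
have [y2 neq2 [eqB' valB]] := cyclic_nesting_block blB xB.
have [y3 neq3 [eqC' valC]] := cyclic_nesting_block blC xC.
rewrite eqB' eqC'; congr [set x; _]; apply: val_inj.
apply: (apex_outer_collision (x := x) (y1 := y1)); rewrite ?ltn_ord //.
- by rewrite -val0 phi0.
- by rewrite -valB -val0 phiB phi0.
- by rewrite -valC -val0 phiC phi0.
- by apply: contraNneq neB => /val_inj eq21; rewrite eqB' eq0 eq21.
- by apply: contraNneq neC => /val_inj eq31; rewrite eqC' eq0 eq31.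
Qed.

Lemma cyclic_weak_nesting : weak_nesting cyclic_nesting.
Proof.
apply/(weak_nestingP le_v_wopt); split.
- exact: cyclic_apex_notin.
- exact: cyclic_inner_incidence_inj.
- exact: cyclic_outer_load.
Qed.

End Cyclic.

Lemma const_weak_nesting v n (q : 'I_n) : v <= 2 -> v <= q ->
  weak_nesting (fun _ : {set 'I_v} => q).
Proof.
move=> v_le2 le_vq; have le_vn : v <= n := leq_trans le_vq (ltnW (ltn_ord q)).
apply/(weak_nestingP le_vn); split=> [A _ x _ | A B x y _ _ _ _ | x q' _].
- by rewrite gtn_eqF // (leq_trans (ltn_ord x)).
- by rewrite ltnNge le_vq.
apply: leq_trans (subset_leq_card (_ : _ \subset [set A : {set 'I_v} | #|A| == 2])) _.
  by apply/subsetP => A; rewrite !inE => /andP[/andP[]].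
by rewrite card_draws card_ord (leq_trans (leq_bin2l 2 v_le2)).
Qed.

Theorem theorem2p1 (v : nat) (hv : 2 <= v) :
  (exists phi : {set 'I_v} -> 'I_(wopt v), weak_nesting phi) /\
  (forall (n : nat) (phi : {set 'I_v} -> 'I_n), weak_nesting phi -> wopt v <= n).
Proof.
have lt_vw : v < wopt v by rewrite /wopt; lia.
split=> [|n phi nest].
  have [v_le2 | v_gt2] := leqP v 2.
    by exists (fun _ => Ordinal lt_vw); apply: const_weak_nesting.
  by exists (cyclic_nesting (Ordinal lt_vw)); apply: cyclic_weak_nesting.
by have [le_vn _] := nest; exact (weak_nesting_wopt le_vn nest).
Qed.
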